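(* For all $n\ge1$, $0\le i\le p-2$ and $\Upsilon\in\{\alpha,\beta\}$, \[ P_n(f,\Upsilon,\omega^i)\equiv \frac{1}{\Upsilon^{n+1}}P_n(f,\omega^i)-\frac{\epsilon_f(p)p^{k-2}}{\Upsilon^{n+2}}\,\tilde\Phi_{n,k-1}\cdot P_{n-1}(f,\omega^i)\mod \omega_{n,k-1}. \]
   Context: Let $p$ be an odd prime, fix $\overline{\mathbb{Q}}\hookrightarrow\mathbb{C}_p$. Let $f=\sum a_nq^n\in S_k(\Gamma_1(N_f),\epsilon_f)$ be a normalized cuspidal Hecke eigenform of weight $k\ge2$, $p\nmid N_f$, $\mathrm{ord}_p(a_p)>0$. Let $E/\mathbb{Q}_p$ be finite containing all $a_n$ and values of $\epsilon_f$, $\mathcal{O}$ its integers; $\alpha,\beta$ the roots of $X^2-a_pX+\epsilon_f(p)p^{k-1}$ and $E'=E(\alpha)$. Galois groups: $\Delta=\mathrm{Gal}(\mathbb{Q}(\mu_p)/\mathbb{Q})$ with Teichmüller character $\omega$; $G_\infty=\mathrm{Gal}(\mathbb{Q}(\mu_{p^\infty})/\mathbb{Q}(\mu_p))$ with generator $\gamma$, $u=\chi_{\mathrm{cyc}}(\gamma)$; $G_n=\mathrm{Gal}(\mathbb{Q}(\mu_{p^{n+1}})/\mathbb{Q}(\mu_p))$; for $a\in(\mathbb{Z}/p^{n+1}\mathbb{Z})^\times$, $\bar\sigma_a\in G_n$ is the image of $\zeta\mapsto\zeta^a$ and $\bar\sigma_a=\gamma^{m(a)}$ with $0\le m(a)<p^n$.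 Polynomials: $\omega_n=(1+X)^{p^n}-1$; $\Phi_0=X$, $\Phi_n=\sum_{s=0}^{p-1}(1+X)^{sp^{n-1}}$ ($n\ge1$); $\omega_{n,h}=\prod_{j=0}^{h-1}\omega_n(u^{-j}(1+X)-1)$. $\tilde\Phi_{n,k-1}\in E[X]$ denotes a polynomial with $\tilde\Phi_{n,k-1}\equiv\Phi_n(u^{-j}(1+X)-1)\bmod\omega_n(u^{-j}(1+X)-1)$ for all $0\le j\le k-2$. Periods $\Omega_f^\pm\in\mathbb{C}^\times$: cohomological periods, i.e. for all $r\in\mathbb{Q}$, $\pi\sqrt{-1}\big(\int_r^{i\infty}f(z)(zX+Y)^{k-2}dz\pm(-1)^k\int_{-r}^{i\infty}f(z)(-zX+Y)^{k-2}dz\big)/\Omega_f^\pm\in\mathcal{O}[X,Y]$ (primitive up to $\mathcal{O}^\times$). Theta elements: $\theta_{n,j}(f,\omega^i)=\frac{\pi\sqrt{-1}}{\Omega_f^{(-1)^i}}\sum_{a}\big(\int_{-a/p^{n+1}}^{i\infty}f(z)(p^{n+1}z+a)^jdz+(-1)^{i+k+j}\int_{a/p^{n+1}}^{i\infty}f(z)(p^{n+1}z-a)^jdz\big)\omega^{i-j}(a)\bar\sigma_a\in\mathcal{O}[G_n]$, sum over $a\in(\mathbb{Z}/p^{n+1}\mathbb{Z})^\times$; $Q_{n,j}(f,\omega^i)\in\mathcal{O}[X]$ by replacing $\bar\sigma_a$ with $(1+X)^{m(a)}$. For $n\ge1$, $\theta_{n,j}(f,\Upsilon,\omega^i)=\Upsilon^{-n-1}\theta_{n,j}(f,\omega^i)-\epsilon_f(p)p^{k-2}\Upsilon^{-n-2}\nu^n_{n-1}\theta_{n-1,j}(f,\omega^i)\in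 E'[G_n]$, where $\nu^n_{n-1}:\mathcal{O}[G_{n-1}]\to\mathcal{O}[G_n]$ sends $\sigma$ to the sum of its preimages; $Q_{n,j}(f,\Upsilon,\omega^i)\in E'[X]$ is its image under $\bar\sigma_a\mapsto(1+X)^{m(a)}$. $P_n(f,\omega^i)\in E[X]$ (resp. $P_n(f,\Upsilon,\omega^i)\in E'[X]$) is the unique polynomial of degree $<(k-1)p^n$ congruent to $Q_{n,j}(f,\omega^i)(u^{-j}(1+X)-1)$ (resp. $Q_{n,j}(f,\Upsilon,\omega^i)(u^{-j}(1+X)-1)$) modulo $\omega_n(u^{-j}(1+X)-1)$ for every $0\le j\le k-2$. *)

From HB Require Import structures.
From mathcomp Require Import all_boot all_order all_algebra.
Set Implicit Arguments. Unset Strict Implicit. Unset Printing Implicit Defensive.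
Import Order.TTheory GRing.Theory Num.Theory.
Local Open Scope ring_scope.

Section Iwasawa.
Variable L : fieldType.

Definition omega_n (p n : nat) : {poly L} := ('X + 1) ^+ (p ^ n) - 1.

Definition Phi_n (p n : nat) : {poly L} :=
  if n is n'.+1 then \sum_(s < p) ('X + 1) ^+ (s * p ^ n') else 'X.

Definition twist (u : L) (j : nat) : {poly L} := (u ^- j) *: ('X + 1) - 1.

Definition tw (u : L) (j : nat) (g : {poly L}) : {poly L} := g \Po twist u j.

Definition omega_nh (p : nat) (u : L) (n h : nat) : {poly L} :=
  \prod_(j < h) tw u j (omega_n p n).

(* An element of L[G_n], G_n cyclic of order p^n generated by gamma, is given
   by its coefficient function c : m |-> coefficient of gamma^m (0 <= m < p^n).
   Its image under gamma^m |-> (1+X)^m : *)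
Definition grp_poly (p n : nat) (c : nat -> L) : {poly L} :=
  \sum_(m < p ^ n) c m *: ('X + 1) ^+ m.

(* nu^n_{n-1} : L[G_{n-1}] -> L[G_n], sigma |-> sum of its preimages;
   the coefficient of gamma^m (m < p^n) in nu(c) is that of gamma^(m mod p^(n-1)) in c. *)
Definition nu (p n : nat) (c : nat -> L) : nat -> L := fun m => c (modn m (p ^ n.-1)).

Definition theta_Ups (p k : nat) (eps Ups : L) (th : nat -> nat -> nat -> L)
  (n j : nat) : nat -> L :=
  fun m => Ups ^- n.+1 * th n j m
           - eps * (p ^ (k - 2))%:R * Ups ^- n.+2 * nu p n (th n.-1 j) m.

(* P is "the" polynomial P_n attached to the family j |-> Q_j :
   deg P < (k-1) p^n and P == Q_j(u^{-j}(1+X)-1) mod omega_n(u^{-j}(1+X)-1), 0<=j<=k-2 *)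
Definition is_P (p k : nat) (u : L) (n : nat) (Q : nat -> {poly L}) (P : {poly L}) :=
  (size P <= (k - 1) * p ^ n)%N /\
  forall j, (j <= k - 2)%N -> tw u j (omega_n p n) %| P - tw u j (Q j).

Definition is_Phitilde (p k : nat) (u : L) (n : nat) (P : {poly L}) :=
  forall j, (j <= k - 2)%N -> tw u j (omega_n p n) %| P - tw u j (Phi_n p n).

End Iwasawa.

From HB Require Import structures.
From mathcomp Require Import all_boot all_order all_algebra.
From mathcomp Require Import ring.
Import Order.TTheory GRing.Theory Num.Theory.
Local Open Scope ring_scope.

(* The polynomials [omega_n(u^-j (1+X) - 1) = u^(-j p^n) (1+X)^(p^n) - 1] are
   pairwise coprime because u is not a root of unity, so it suffices to check
   the congruence modulo each of them.  Under gamma^m |-> (1+X)^m the map nu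
   becomes multiplication by Phi_n, and omega_n = Phi_n omega_(n-1); hence modulo
   the j-th factor the defining congruences of P_n(f,Ups), P_n, P_(n-1) and
   Phi~ combine linearly, the only cross term Phi_n (P_(n-1) - Q_(n-1)) being
   divisible by Phi_n omega_(n-1) = omega_n. *)

Lemma prod_dvdp_coprime (R : idomainType) (D : nat -> {poly R}) (F : {poly R}) h :
  (forall j j', (j < j')%N -> coprimep (D j) (D j')) ->
  (forall j, (j < h)%N -> D j %| F) -> \prod_(j < h) D j %| F.
Proof.
move=> coD; elim: h => [|h IH] DF; first by rewrite big_ord0 dvd1p.
rewrite big_ord_recr /= Gauss_dvdp ?DF ?IH // => [j jh|].
  by rewrite DF // ltnS ltnW.
apply: (big_ind (fun P => coprimep P (D h))) => [|x y|j _]; first exact: coprime1p.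
  by rewrite coprimepMl => -> ->.
exact: coD.
Qed.

Lemma sum_expr_mod (R : nzRingType) (A : algType R) (c : nat -> R) (Y : A) t N :
  \sum_(m < t * N) c (m %% N)%N *: Y ^+ m =
  (\sum_(s < t) Y ^+ (s * N)) * \sum_(r < N) c r *: Y ^+ r.
Proof.
elim: t => [|t IH]; first by rewrite !big_ord0 mul0r.
rewrite mulSnr big_split_ord /= IH big_ord_recr /= mulrDl; congr (_ + _).
rewrite mulr_sumr; apply: eq_bigr => r _.
by rewrite modnMDl modn_small // exprD -scalerAr.
Qed.

Lemma dvdp_lincomb_congr (R : idomainType) (a c : R) (T E U P P1 Q G Phi : {poly R}) :
  T * E %| U - (a *: Q - c *: (T * G)) -> T * E %| P - Q ->
  T * E %| Phi - T -> E %| P1 - G ->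
  T * E %| U - (a *: P - c *: (Phi * P1)).
Proof.
move=> dU dP dPhi dP1.
have -> : U - (a *: P - c *: (Phi * P1)) =
    U - (a *: Q - c *: (T * G)) - a%:P * (P - Q) + c%:P * ((Phi - T) * P1 + T * (P1 - G)).
  by rewrite -!mul_polyC; ring.
apply: dvdp_add; first by apply: dvdp_sub => //; apply: dvdp_mull.
apply/dvdp_mull/dvdp_add; first exact: dvdp_mulr.
exact: dvdp_mul (dvdpp T) dP1.
Qed.

Section Iwasawa.
Variable L : fieldType.

Lemma tw_omega_n (p n : nat) (u : L) j :
  tw u j (omega_n L p n) = (u ^- j) ^+ (p ^ n) *: ('X + 1) ^+ (p ^ n) - 1.
Proof.
rewrite /tw /omega_n rmorphB rmorph1 rmorphXn rmorphD /= comp_polyX rmorph1.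
by rewrite /twist subrK exprZn.
Qed.

Lemma coprimep_tw_omega_n (p n : nat) (u : L) j h :
  (0 < p)%N -> u != 0 -> (forall m : nat, (0 < m)%N -> u ^+ m != 1) -> (j < h)%N ->
  coprimep (tw u j (omega_n L p n)) (tw u h (omega_n L p n)).
Proof.
move=> p_gt0 u_neq0 u_not_root jh; rewrite !tw_omega_n.
set a := (u ^- j) ^+ (p ^ n); set b := (u ^- h) ^+ (p ^ n).
set Y := ('X + 1) ^+ (p ^ n).
apply/Bezout_coprimepP; exists (b%:P, - a%:P) => /=.
have -> : b%:P * (a *: Y - 1) + - a%:P * (b *: Y - 1) = (a - b)%:P.
  by rewrite -!mul_polyC rmorphB /=; ring.
rewrite polyC_eqp1 subr_eq0; apply: contra (u_not_root ((h - j) * p ^ n)%N _) => [/eqP eab|].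
  apply/eqP/(mulIf (expf_neq0 (j * p ^ n) u_neq0)).
  rewrite mul1r -exprD -mulnDl subnK ?(ltnW jh) //.
  by move: eab; rewrite /a /b !exprVn -!exprM => /invr_inj ->.
by rewrite muln_gt0 subn_gt0 jh expn_gt0 p_gt0.
Qed.

Lemma grp_poly_lincomb p n (a b : L) (f g : nat -> L) :
  grp_poly p n (fun m => a * f m - b * g m) = a *: grp_poly p n f - b *: grp_poly p n g.
Proof.
rewrite /grp_poly !scaler_sumr -sumrB; apply: eq_bigr => m _.
by rewrite scalerBl !scalerA.
Qed.

Lemma grp_poly_nu p n (c : nat -> L) :
  grp_poly p n.+1 (nu p n.+1 c) = Phi_n L p n.+1 * grp_poly p n c.
Proof. by rewrite /grp_poly /nu /Phi_n /= expnS sum_expr_mod. Qed.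

Lemma Phi_n_omega_n p n : Phi_n L p n.+1 * omega_n L p n = omega_n L p n.+1.
Proof.
rewrite /omega_n expnSr exprM [RHS]subrX1 mulrC; congr (_ * _).
by apply: eq_bigr => s _; rewrite mulnC exprM.
Qed.

Lemma tw_omega_n_succ p n (u : L) j :
  tw u j (omega_n L p n.+1) = tw u j (Phi_n L p n.+1) * tw u j (omega_n L p n).
Proof. by rewrite -Phi_n_omega_n /tw comp_polyM. Qed.

Lemma tw_lincomb (u a c : L) j (Q T G : {poly L}) :
  tw u j (a *: Q - c *: (T * G)) = a *: tw u j Q - c *: (tw u j T * tw u j G).
Proof. by rewrite /tw comp_polyB !comp_polyZ comp_polyM. Qed.

End Iwasawa.

Theorem lemma3p8
  (L : fieldType) (char0 : [pchar L] =i pred0)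
  (p k : nat) (p_prime : prime p) (p_odd : (2 < p)%N) (k_ge2 : (2 <= k)%N)
  (u : L) (u_neq0 : u != 0) (u_not_root_unity : forall m : nat, (0 < m)%N -> u ^+ m != 1)
  (ap eps : L) (eps_neq0 : eps != 0)
  (Ups : L) (Ups_root : Ups ^+ 2 - ap * Ups + eps * (p ^ (k - 1))%:R = 0)
  (* theta i n j m = coefficient of gamma^m in theta_{n,j}(f, omega^i) *)
  (theta : nat -> nat -> nat -> nat -> L)
  (n i : nat) (n_ge1 : (1 <= n)%N) (i_le : (i <= p - 2)%N)
  (Pn Pn1 PnUps Phit : {poly L})
  (HPn : is_P p k u n (fun j => grp_poly p n (theta i n j)) Pn)
  (HPn1 : is_P p k u n.-1 (fun j => grp_poly p n.-1 (theta i n.-1 j)) Pn1)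
  (HPnUps : is_P p k u n
     (fun j => grp_poly p n (theta_Ups p k eps Ups (theta i) n j)) PnUps)
  (HPhit : is_Phitilde p k u n Phit) :
  omega_nh p u n (k - 1) %|
    PnUps - (Ups ^- n.+1 *: Pn - (eps * (p ^ (k - 2))%:R * Ups ^- n.+2) *: (Phit * Pn1)).
Proof.
case: n n_ge1 HPn HPn1 HPnUps HPhit => [//|n] _ [_ HPn] [_ HPn1] [_ HPnUps] HPhit.
apply: (@prod_dvdp_coprime _ (fun j => tw u j (omega_n L p n.+1))) => [j h jh|j jk].
  exact: coprimep_tw_omega_n (prime_gt0 p_prime) u_neq0 u_not_root_unity jh.
have jk2 : (j <= k - 2)%N by rewrite -ltnS -subSn // subSS.
move: (HPn j jk2) (HPn1 j jk2) (HPnUps j jk2) (HPhit j jk2).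
rewrite /theta_Ups grp_poly_lincomb grp_poly_nu !tw_omega_n_succ.
rewrite tw_lincomb => dPn dPn1 dPnUps dPhit.
exact: dvdp_lincomb_congr dPnUps dPn dPhit dPn1.
Qed.
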